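(* Let $(I,\preccurlyeq)$ be a directed set, let $S(\Lambda^{\preccurlyeq})$ be a direct spectrum over $(I,\preccurlyeq)$ with sets $\lambda_0(i)$, transports $\lambda^{\preccurlyeq}_{ij}$ and Bishop spaces $\mathcal F_i=(\lambda_0(i),F_i)$, and let $\mathcal F=(X,F)$ be a Bishop space. Let $S(\Lambda^{\preccurlyeq})\to\mathcal F$ be the contravariant direct spectrum over $(I,\preccurlyeq)$ with sets $\mathrm{Mor}(\mathcal F_i,\mathcal F)$, transports $(\lambda^{\preccurlyeq}_{ij})^+:\mathrm{Mor}(\mathcal F_j,\mathcal F)\to\mathrm{Mor}(\mathcal F_i,\mathcal F)$, $\phi\mapsto\phi\circ\lambda^{\preccurlyeq}_{ij}$ (for $i\preccurlyeq j$), and Bishop spaces $\mathcal F_i\to\mathcal F$. Then $\underset{\leftarrow}{\mathrm{Lim}}\,(\mathcal F_i\to\mathcal F)\simeq(\underset{\to}{\mathrm{Lim}}\,\mathcal F_i)\to\mathcal F$.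
   Context: Work in Bishop-style constructive mathematics. A directed set: a set with a reflexive transitive relation respecting equality, any two elements having a common upper bound. A direct family over $(I,\preccurlyeq)$: sets $\lambda_0(i)$ and functions $\lambda^{\preccurlyeq}_{ij}:\lambda_0(i)\to\lambda_0(j)$ for $i\preccurlyeq j$ with $\lambda^{\preccurlyeq}_{ii}=\mathrm{id}$ and $\lambda^{\preccurlyeq}_{ik}=\lambda^{\preccurlyeq}_{jk}\circ\lambda^{\preccurlyeq}_{ij}$. A contravariant direct family: sets $\mu_0(i)$ and functions $\mu^{\succcurlyeq}_{ji}:\mu_0(j)\to\mu_0(i)$ for $i\preccurlyeq j$ with $\mu^{\succcurlyeq}_{ii}=\mathrm{id}$, $\mu^{\succcurlyeq}_{ki}=\mu^{\succcurlyeq}_{ji}\circ\mu^{\succcurlyeq}_{kj}$. Bishop spaces: a Bishop topology on $X$ is a set $F$ of functions $X\to\mathbb R$ containing constants, closed under addition, composition with functions $\mathbb R\to\mathbb R$ uniformly continuous on every $[-n,n]$, and uniform limits; $\bigvee F_0$ = least Bishop topology containing $F_0$; Bishop morphism $(X,F)\to(Y,G)$: a function $h$ with $g\circ h\in F$ for all $g\in G$; Bishop isomorphism: bijective morphism with morphism inverse; $\simeq$: Bishop isomorphic. Exponential: $\mathcal F\to\mathcal G=(\mathrm{Mor}(\mathcal F,\mathcal G),\bigvee\{\phi_{x,g}:x\in X,g\in G\})$, $\phi_{x,g}(h)=g(h(x))$. A (contravariant) direct spectrum: a (contravariant) direct family with Bishop topologies on each set making all transports Bishop morphisms. Direct limit: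 $\sum^{\preccurlyeq}\lambda_0(i)$ = pairs $(i,x)$ with $(i,x)=(j,y)$ iff there is $k\succcurlyeq i,j$ with $\lambda^{\preccurlyeq}_{ik}(x)=\lambda^{\preccurlyeq}_{jk}(y)$; $\prod^{\succcurlyeq}F_i$ = dependent assignments $\Theta$ with $\Theta_i\in F_i$ and $\Theta_i=\Theta_j\circ\lambda^{\preccurlyeq}_{ij}$ for $i\preccurlyeq j$; $\underset{\to}{\mathrm{Lim}}\,\lambda_0(i)$ = classes $\mathrm{eql}_0(i,x)$ under that equality; $\mathrm{eql}_0f_\Theta(\mathrm{eql}_0(i,x))=\Theta_i(x)$; $\underset{\to}{\mathrm{Lim}}\,\mathcal F_i=(\underset{\to}{\mathrm{Lim}}\,\lambda_0(i),\bigvee\{\mathrm{eql}_0f_\Theta:\Theta\in\prod^{\succcurlyeq}F_i\})$. Inverse limit of a contravariant spectrum with sets $\mu_0(i)$, transports $\mu^{\succcurlyeq}_{ji}$, topologies $G_i$: $\prod^{\succcurlyeq}\mu_0(i)$ = dependent assignments $\Phi$ with $\Phi_i\in\mu_0(i)$, $\Phi_i=\mu^{\succcurlyeq}_{ji}(\Phi_j)$ for $i\preccurlyeq j$ (pointwise equality); $\pi_i(\Phi)=\Phi_i$; $\underset{\leftarrow}{\mathrm{Lim}}\,\mathcal G_i=(\prod^{\succcurlyeq}\mu_0(i),\bigvee\{g\circ\pi_i:i\in I,g\in G_i\})$. *)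

(* Bishop sets are modelled as a carrier type with an explicit equality
   relation (setoid-style); quotients (the direct limit) are given by
   changing the equality relation, as in Bishop set theory. *)
From Stdlib Require Import Reals.
Open Scope R_scope.

Record BSet := { bcar :> Type; beq : bcar -> bcar -> Prop }.
Arguments beq {b} _ _.

Definition is_equiv (X : BSet) : Prop :=
  (forall x : X, beq x x) /\
  (forall x y : X, beq x y -> beq y x) /\
  (forall x y z : X, beq x y -> beq y z -> beq x z).

Definition is_fun (X Y : BSet) (f : X -> Y) : Prop :=
  forall x y : X, beq x y -> beq (f x) (f y).

Definition is_rfun (X : BSet) (f : X -> R) : Prop :=
  forall x y : X, beq x y -> f x = f y.

Definition Top (X : BSet) := (X -> R) -> Prop.

Definition Bic (phi : R -> R) : Prop :=
  forall (n : nat) (eps : R), 0 < eps ->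
    exists delta, 0 < delta /\
      forall x y, Rabs x <= INR n -> Rabs y <= INR n ->
        Rabs (x - y) < delta -> Rabs (phi x - phi y) < eps.

Definition is_bishop_top (X : BSet) (F : Top X) : Prop :=
  (forall f, F f -> is_rfun X f) /\
  (forall c : R, F (fun _ => c)) /\
  (forall f g, F f -> F g -> F (fun x => f x + g x)) /\
  (forall f phi, F f -> Bic phi -> F (fun x => phi (f x))) /\
  (forall f, is_rfun X f ->
     (forall eps, 0 < eps -> exists g, F g /\ forall x, Rabs (g x - f x) <= eps) ->
     F f).

Inductive bigvee (X : BSet) (F0 : Top X) : Top X :=
| bv_base f : is_rfun X f -> F0 f -> bigvee X F0 f
| bv_const (c : R) : bigvee X F0 (fun _ => c)
| bv_add f g : bigvee X F0 f -> bigvee X F0 g -> bigvee X F0 (fun x => f x + g x)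
| bv_comp f phi : bigvee X F0 f -> Bic phi -> bigvee X F0 (fun x => phi (f x))
| bv_lim f : is_rfun X f ->
    (forall eps, 0 < eps -> exists g, bigvee X F0 g /\ forall x, Rabs (g x - f x) <= eps) ->
    bigvee X F0 f.

Record BSpace := { bs_set :> BSet; bs_top : Top bs_set }.

Definition is_mor (A B : BSpace) (h : A -> B) : Prop :=
  is_fun A B h /\ forall g, bs_top B g -> bs_top A (fun x => g (h x)).

Lemma is_mor_comp (A B C : BSpace) (h : A -> B) (k : B -> C) :
  is_mor A B h -> is_mor B C k -> is_mor A C (fun x => k (h x)).
Proof.
  intros [hf ht] [kf kt]; split.
  - intros x y e; apply kf, hf, e.
  - intros g Hg; apply (ht (fun y => g (k y))), kt, Hg.
Qed.

Definition MorSet (A B : BSpace) : BSet :=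
  {| bcar := { h : A -> B | is_mor A B h };
     beq := fun h k => forall x, beq (proj1_sig h x) (proj1_sig k x) |}.

Definition expo (A B : BSpace) : BSpace :=
  {| bs_set := MorSet A B;
     bs_top := bigvee (MorSet A B)
       (fun phi => exists (x : A) (g : B -> R), bs_top B g /\
                     phi = (fun h : MorSet A B => g (proj1_sig h x))) |}.

Definition bishop_iso (A B : BSpace) : Prop :=
  exists (h : A -> B) (k : B -> A),
    is_mor A B h /\ is_mor B A k /\
    (forall x, beq (k (h x)) x) /\ (forall y, beq (h (k y)) y).

Record DirSet := { dI :> Type; deq : dI -> dI -> Prop; dle : dI -> dI -> Prop }.

Definition is_directed (D : DirSet) : Prop :=
  (forall i, deq D i i) /\ (forall i j, deq D i j -> deq D j i) /\
  (forall i j k, deq D i j -> deq D j k -> deq D i k) /\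
  (forall i, dle D i i) /\
  (forall i j k, dle D i j -> dle D j k -> dle D i k) /\
  (forall i i' j j', deq D i i' -> deq D j j' -> dle D i j -> dle D i' j') /\
  (forall i j, exists k, dle D i k /\ dle D j k).

Record DirSpec (D : DirSet) := {
  sp0 : D -> BSet;
  sptop : forall i, Top (sp0 i);
  splam : forall i j, dle D i j -> sp0 i -> sp0 j;
  splam_mor : forall i j (p : dle D i j),
      is_mor {| bs_set := sp0 i; bs_top := sptop i |}
             {| bs_set := sp0 j; bs_top := sptop j |} (splam i j p) }.
Arguments sp0 {D} _ _.
Arguments sptop {D} _ _.
Arguments splam {D} _ _ _ _ _.

Definition spspace {D} (S : DirSpec D) (i : D) : BSpace :=
  {| bs_set := sp0 S i; bs_top := sptop S i |}.

Definition is_direct_spectrum {D} (S : DirSpec D) : Prop :=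
  (forall i, is_equiv (sp0 S i)) /\
  (forall i, is_bishop_top (sp0 S i) (sptop S i)) /\
  (forall i (p : dle D i i) x, beq (splam S i i p x) x) /\
  (forall i j k (p : dle D i j) (q : dle D j k) (r : dle D i k) x,
      beq (splam S i k r x) (splam S j k q (splam S i j p x))).

Definition dlim_set {D} (S : DirSpec D) : BSet :=
  {| bcar := { i : D & sp0 S i };
     beq := fun a b => exists k (p : dle D (projT1 a) k) (q : dle D (projT1 b) k),
              beq (splam S _ k p (projT2 a)) (splam S _ k q (projT2 b)) |}.

Definition in_dep_prod_top {D} (S : DirSpec D) (Theta : forall i, sp0 S i -> R) : Prop :=
  (forall i, sptop S i (Theta i)) /\
  (forall i j (p : dle D i j) x, Theta i x = Theta j (splam S i j p x)).

Definition dlim {D} (S : DirSpec D) : BSpace :=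
  {| bs_set := dlim_set S;
     bs_top := bigvee (dlim_set S)
       (fun f => exists Theta, in_dep_prod_top S Theta /\
                   f = (fun a : dlim_set S => Theta (projT1 a) (projT2 a))) |}.

Record CDirSpec (D : DirSet) := {
  cs0 : D -> BSet;
  cstop : forall i, Top (cs0 i);
  csmu : forall i j, dle D i j -> cs0 j -> cs0 i }.
Arguments cs0 {D} _ _.
Arguments cstop {D} _ _.
Arguments csmu {D} _ _ _ _ _.

Definition invlim_set {D} (C : CDirSpec D) : BSet :=
  {| bcar := { Phi : forall i, cs0 C i |
               forall i j (p : dle D i j), beq (Phi i) (csmu C i j p (Phi j)) };
     beq := fun Phi Psi => forall i, beq (proj1_sig Phi i) (proj1_sig Psi i) |}.

Definition invlim {D} (C : CDirSpec D) : BSpace :=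
  {| bs_set := invlim_set C;
     bs_top := bigvee (invlim_set C)
       (fun f => exists (i : D) (g : cs0 C i -> R), cstop C i g /\
                   f = (fun Phi : invlim_set C => g (proj1_sig Phi i))) |}.

Definition precomp {D} (S : DirSpec D) (F : BSpace) (i j : D) (p : dle D i j)
  (phi : MorSet (spspace S j) F) : MorSet (spspace S i) F :=
  exist _ (fun x => proj1_sig phi (splam S i j p x))
    (is_mor_comp (spspace S i) (spspace S j) F _ _
       (splam_mor D S i j p) (proj2_sig phi)).

Definition exp_spec {D} (S : DirSpec D) (F : BSpace) : CDirSpec D :=
  {| cs0 := fun i => MorSet (spspace S i) F;
     cstop := fun i => bs_top (expo (spspace S i) F);
     csmu := precomp S F |}.

(* A morphism out of the direct limit is the same thing as a compatible family of
   morphisms out of the F_i: restricting along the canonical maps e_i and gluing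
   along the classes eql_0(i, x) are mutually inverse.  Both maps are Bishop
   morphisms because each topology involved is generated (via bigvee) by explicit
   subbases, and a map into a bigvee-space is a morphism as soon as it pulls the
   subbasic functions back into the topology of its domain. *)
From Stdlib Require Import Reals.

Lemma bigvee_is_bishop_top (X : BSet) (F0 : Top X) :
  is_bishop_top X (bigvee X F0).
Proof.
  split; [|split; [|split; [|split]]].
  - intros f Hf; induction Hf as [f rf _|c|f g _ IHf _ IHg|f phi _ IHf _|f rf _].
    + exact rf.
    + intros x y _; reflexivity.
    + intros x y e; rewrite (IHf x y e), (IHg x y e); reflexivity.
    + intros x y e; rewrite (IHf x y e); reflexivity.
    + exact rf.
  - exact (bv_const X F0).
  - exact (bv_add X F0).
  - exact (bv_comp X F0).
  - exact (bv_lim X F0).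
Qed.

Lemma bigvee_pullback (A B : BSet) (F0 : Top B) (T : Top A) (m : A -> B) :
  is_fun A B m -> is_bishop_top A T ->
  (forall f, is_rfun B f -> F0 f -> T (fun x => f (m x))) ->
  forall f, bigvee B F0 f -> T (fun x => f (m x)).
Proof.
  intros Hm [_ [Tc [Tadd [Tcomp Tlim]]]] Hbase.
  (* A hand-written fixpoint: the generated induction principle gives no
     hypothesis for the approximants hidden under the [exists] of [bv_lim]. *)
  fix IH 2; intros f Hf.
  destruct Hf as [f rf Hf|c|f g Hf Hg|f phi Hf Hphi|f rf Happrox].
  - exact (Hbase f rf Hf).
  - exact (Tc c).
  - exact (Tadd _ _ (IH f Hf) (IH g Hg)).
  - exact (Tcomp _ phi (IH f Hf) Hphi).
  - apply Tlim.
    + intros x y e; exact (rf _ _ (Hm x y e)).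
    + intros eps Heps; destruct (Happrox eps Heps) as [g [Hg Hgf]].
      exists (fun x => g (m x)); split; [exact (IH g Hg)|].
      intro x; exact (Hgf (m x)).
Qed.

Lemma is_mor_to_bigvee (A : BSpace) (B : BSet) (F0 : Top B) (h : A -> B) :
  is_bishop_top A (bs_top A) -> is_fun A B h ->
  (forall f, is_rfun B f -> F0 f -> bs_top A (fun x => f (h x))) ->
  is_mor A {| bs_set := B; bs_top := bigvee B F0 |} h.
Proof.
  intros HA Hh Hbase; split; [exact Hh|].
  exact (bigvee_pullback A B F0 (bs_top A) h Hh HA Hbase).
Qed.

Lemma expo_eval_top (A C : BSpace) (a : A) (g : C -> R) :
  is_rfun C g -> bs_top C g -> bs_top (expo A C) (fun h => g (proj1_sig h a)).
Proof.
  intros rg Hg; apply bv_base.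
  - intros h k e; exact (rg _ _ (e a)).
  - exists a, g; split; [exact Hg | reflexivity].
Qed.

Definition precomp_mor (A B C : BSpace) (e : A -> B) (He : is_mor A B e)
  (h : MorSet B C) : MorSet A C :=
  exist _ (fun x => proj1_sig h (e x)) (is_mor_comp A B C e _ He (proj2_sig h)).

Lemma precomp_mor_is_mor (A B C : BSpace) (e : A -> B) (He : is_mor A B e) :
  is_bishop_top C (bs_top C) ->
  is_mor (expo B C) (expo A C) (precomp_mor A B C e He).
Proof.
  intros [rC _]; apply is_mor_to_bigvee.
  - exact (bigvee_is_bishop_top _ _).
  - intros h k hk x; exact (hk (e x)).
  - intros f _ [a [g [Hg ->]]]; exact (expo_eval_top B C (e a) g (rC g Hg) Hg).
Qed.

Section InverseLimit.

Variables (D : DirSet) (C : CDirSpec D).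

Definition cs_space (i : D) : BSpace := {| bs_set := cs0 C i; bs_top := cstop C i |}.

Lemma invlim_proj_mor (i : D) :
  is_bishop_top (cs0 C i) (cstop C i) ->
  is_mor (invlim C) (cs_space i) (fun Phi => proj1_sig Phi i).
Proof.
  intros [rCi _]; split.
  - intros Phi Psi e; exact (e i).
  - intros g Hg; apply bv_base.
    + intros Phi Psi e; exact (rCi g Hg _ _ (e i)).
    + exists i, g; split; [exact Hg | reflexivity].
Qed.

Lemma invlim_lift_mor (A : BSpace) (h : A -> invlim C) :
  is_bishop_top A (bs_top A) ->
  (forall i, is_mor A (cs_space i) (fun a => proj1_sig (h a) i)) ->
  is_mor A (invlim C) h.
Proof.
  intros HA Hh; apply is_mor_to_bigvee; [exact HA| |].
  - intros a b e i; exact (proj1 (Hh i) a b e).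
  - intros f _ [i [g [Hg ->]]]; exact (proj2 (Hh i) g Hg).
Qed.

End InverseLimit.

Section DirectLimit.

Variables (D : DirSet) (S : DirSpec D).

Lemma dlim_lift_mor (B : BSpace) (phi : forall i, spspace S i -> B) :
  is_equiv B -> is_bishop_top B (bs_top B) ->
  (forall i, is_mor (spspace S i) B (phi i)) ->
  (forall i j (p : dle D i j) x, beq (phi i x) (phi j (splam S i j p x))) ->
  is_mor (dlim S) B (fun a => phi (projT1 a) (projT2 a)).
Proof.
  intros [_ [Bsym Btrans]] [rB _] Hphi Hcoh.
  assert (Hfun : is_fun (dlim S) B (fun a => phi (projT1 a) (projT2 a))).
  { intros [i x] [j y] [k [p [q e]]]; simpl in *.
    apply (Btrans _ _ _ (Hcoh i k p x)), (Btrans _ _ _ (proj1 (Hphi k) _ _ e)).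
    apply Bsym, Hcoh. }
  split; [exact Hfun|].
  intros g Hg; apply bv_base.
  - intros a b e; exact (rB g Hg _ _ (Hfun a b e)).
  - exists (fun i x => g (phi i x)); split; [split | reflexivity].
    + intro i; exact (proj2 (Hphi i) g Hg).
    + intros i j p x; exact (rB g Hg _ _ (Hcoh i j p x)).
Qed.

Hypotheses (HD : is_directed D) (HS : is_direct_spectrum S).

Definition dlim_inj (i : D) (x : spspace S i) : dlim S := existT _ i x.

Lemma dlim_inj_transport (i j : D) (p : dle D i j) (x : sp0 S i) :
  beq (dlim_inj i x) (dlim_inj j (splam S i j p x)).
Proof.
  destruct HD as [_ [_ [_ [Drefl _]]]]; destruct HS as [Seq [_ [Sid _]]].
  exists j, p, (Drefl j); apply (proj1 (proj2 (Seq j))), Sid.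
Qed.

Lemma dlim_inj_mor (i : D) : is_mor (spspace S i) (dlim S) (dlim_inj i).
Proof.
  destruct HD as [_ [_ [_ [Drefl _]]]]; destruct HS as [Seq [Stop [Sid _]]].
  destruct (Seq i) as [_ [Ssym Strans]].
  apply is_mor_to_bigvee; [exact (Stop i)| |].
  - intros x y e; exists i, (Drefl i), (Drefl i).
    apply (Strans _ _ _ (Sid _ _ _)), (Strans _ _ _ e), Ssym, Sid.
  - intros f _ [Theta [[HTheta _] ->]]; exact (HTheta i).
Qed.

Variable F : BSpace.
Hypotheses (HF : is_equiv F) (HFt : is_bishop_top F (bs_top F)).

Definition restrict_cone (h : MorSet (dlim S) F) : invlim_set (exp_spec S F) :=
  exist (fun Phi => forall i j p, beq (Phi i) (precomp S F i j p (Phi j)))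
    (fun i => precomp_mor _ _ F (dlim_inj i) (dlim_inj_mor i) h)
    (fun i j p x => proj1 (proj2_sig h) _ _ (dlim_inj_transport i j p x)).

Definition glue (Phi : invlim_set (exp_spec S F)) : MorSet (dlim S) F :=
  exist _ (fun a => proj1_sig (proj1_sig Phi (projT1 a)) (projT2 a))
    (dlim_lift_mor F (fun i => proj1_sig (proj1_sig Phi i)) HF HFt
       (fun i => proj2_sig (proj1_sig Phi i)) (proj2_sig Phi)).

Lemma restrict_cone_mor :
  is_mor (expo (dlim S) F) (invlim (exp_spec S F)) restrict_cone.
Proof.
  apply invlim_lift_mor; [exact (bigvee_is_bishop_top _ _)|].
  intro i; exact (precomp_mor_is_mor _ _ F _ (dlim_inj_mor i) HFt).
Qed.

Lemma glue_mor : is_mor (invlim (exp_spec S F)) (expo (dlim S) F) glue.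
Proof.
  destruct HFt as [rF _].
  apply is_mor_to_bigvee; [exact (bigvee_is_bishop_top _ _)| |].
  - intros Phi Psi e [i x]; exact (e i x).
  - intros f _ [[i x] [g [Hg ->]]].
    exact (proj2 (invlim_proj_mor D (exp_spec S F) i (bigvee_is_bishop_top _ _))
             _ (expo_eval_top (spspace S i) F x g (rF g Hg) Hg)).
Qed.

End DirectLimit.

Theorem theorem11p3 (D : DirSet) (S : DirSpec D) (F : BSpace) :
  is_directed D ->
  is_direct_spectrum S ->
  is_equiv F ->
  is_bishop_top F (bs_top F) ->
  bishop_iso (invlim (exp_spec S F)) (expo (dlim S) F).
Proof.
  intros HD HS HF HFt.
  exists (glue D S F HF HFt), (restrict_cone D S HD HS F).
  split; [exact (glue_mor D S F HF HFt)|].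
  split; [exact (restrict_cone_mor D S HD HS F HFt)|].
  split.
  - intros Phi i x; apply (proj1 HF).
  - intros h [i x]; apply (proj1 HF).
Qed.
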